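(* (a) For $V=\mathbb F_2\mathbb Z_4$ with basis $x^0,x^1,x^2,x^3$ and $x^\mu\circ x^\nu=x^{\mu+\nu \bmod 4}$, the associated calculus on $\mathbb F_2[x^0,\dots,x^3]$ has exactly $8$ quantum metrics: the four metrics $g_m=\sum_\mu\mathrm dx^\mu\otimes\mathrm dx^{m-\mu}$ ($m=0,1,2,3$, indices mod 4) and the four metrics $g_m+c\otimes c$, where $c=\sum_\mu\mathrm dx^\mu$ (i.e. with all coefficients complemented $0\leftrightarrow1$). (b) For $V=A_2=\mathbb F_2[X]/\langle X^4-X\rangle$ with basis $x^\mu=X^\mu$, $\mu=0,1,2,3$ (so $x^0$ is the unit and $x^\mu\circ x^\nu=x^{\mu+\nu}$ if $\mu+\nu<4$, reduced using $x^4=x^1$ otherwise), the associated calculus on $\mathbb F_2[x^0,\dots,x^3]$ has exactly $3$ quantum metrics.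
   Context: Standing setup. Work over $\mathbb F_2$. Let $(V,\circ)$ be a commutative associative algebra over $\mathbb F_2$ with basis $x^1,\dots,x^n$ and structure constants $x^\mu\circ x^\nu=\sum_\rho V^{\mu\nu}{}_\rho x^\rho$. Let $A=\mathbb F_2[x^1,\dots,x^n]$ be the polynomial algebra on the same symbols. The associated differential calculus is the $A$-bimodule $\Omega^1$ which is free as a left $A$-module on $\mathrm dx^1,\dots,\mathrm dx^n$, with right action determined by $\mathrm dx^\mu\, x^\nu=x^\nu\,\mathrm dx^\mu+\sum_\rho V^{\mu\nu}{}_\rho\,\mathrm dx^\rho$, together with the unique map $\mathrm d:A\to\Omega^1$ satisfying the Leibniz rule, $\mathrm d(x^\mu)=\mathrm dx^\mu$, $\mathrm d1=0$. The bimodule $\Omega^1\otimes_A\Omega^1$ is free as a left module on $\mathrm dx^\mu\otimes\mathrm dx^\nu$. A quantum metric is $g=\sum_{\mu,\nu}g_{\mu\nu}\mathrm dx^\mu\otimes\mathrm dx^\nu$ with constants $g_{\mu\nu}\in\mathbb F_2$, $g_{\mu\nu}=g_{\nu\mu}$, the matrix $(g_{\mu\nu})$ invertible, and $g$ central: $x^\rho g=g x^\rho$ for all $\rho$. (Here the basis is indexed $0,\dots,3$; superscripts are labels, not exponents.) *)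

From HB Require Import structures.
From mathcomp Require Import all_boot all_order all_algebra.
Set Implicit Arguments. Unset Strict Implicit. Unset Printing Implicit Defensive.
Import GRing.Theory.
Local Open Scope ring_scope.

(* Scalars F_2, and the polynomial ring F_2[t] used as the subring F_2[x^rho] of
   A = F_2[x^0,...,x^3] generated by one fixed generator x^rho ('X plays x^rho). *)
Notation F2 := 'F_2.
Notation P := {poly 'F_2}.

(* Structure constants: Vc mu nu rho = V^{mu nu}_rho, indices in 'I_4. *)
Definition structConst := 'I_4 -> 'I_4 -> 'I_4 -> F2.

(* Right multiplication by x^rho on Omega^1 (left-free on dx^0..dx^3):
   (sum_mu a_mu dx^mu) x^rho = a *m Rmat Vc rho, where
   dx^mu x^rho = x^rho dx^mu + sum_tau V^{mu rho}_tau dx^tau. *)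
Definition Rmat (Vc : structConst) (rho : 'I_4) : 'M[P]_4 :=
  \matrix_(mu, tau) ('X *+ (mu == tau) + (Vc mu rho tau)%:P).

(* Right action of a polynomial p(x^rho) on dx^mu: the row vector
   dx^mu . p(x^rho) = sum_i p_i dx^mu (x^rho)^i = row mu of p(Rmat). *)
Definition ract1 (Vc : structConst) (rho : 'I_4) (mu : 'I_4) (p : P) : 'rV[P]_4 :=
  row mu (horner_mx (Rmat Vc rho) (map_poly polyC p)).

(* An element sum_{mu,nu} W mu nu dx^mu (x) dx^nu of Omega^1 (x)_A Omega^1 with
   coefficients in F_2[x^rho] is represented by W : 'M[P]_4.
   Right multiplication by x^rho:
     (dx^mu (x) dx^nu) x^rho = dx^mu (x) (sum_s R_{nu s} dx^s)
                             = sum_s (dx^mu . R_{nu s}) (x) dx^s. *)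
Definition ract2 (Vc : structConst) (rho : 'I_4) (W : 'M[P]_4) : 'M[P]_4 :=
  \matrix_(tau, s) \sum_(mu < 4) \sum_(nu < 4)
     W mu nu * ract1 Vc rho mu (Rmat Vc rho nu s) 0 tau.

Definition lmul2 (W : 'M[P]_4) : 'M[P]_4 := 'X *: W.

Definition constForm (g : 'M[F2]_4) : 'M[P]_4 := map_mx polyC g.

Definition quantum_metric (Vc : structConst) (g : 'M[F2]_4) : Prop :=
  [/\ g^T = g, g \in unitmx &
      forall rho : 'I_4, lmul2 (constForm g) = ract2 Vc rho (constForm g)].

Definition VZ4 : structConst :=
  fun mu nu rho => ((mu + nu) %% 4 == rho)%N%:R.

(* V = F_2[X]/<X^4 - X>, x^mu = X^mu, X^4 = X (so X^5 = X^2, X^6 = X^3). *)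
Definition VA2 : structConst :=
  fun mu nu rho =>
    (let s := (mu + nu)%N in (if (s < 4)%N then s else (s - 3)%N) == rho)%N%:R.

Definition gZ4 (m : 'I_4) : 'M[F2]_4 :=
  \matrix_(mu, nu) ((mu + nu) %% 4 == m)%N%:R.

Definition cc : 'M[F2]_4 := const_mx 1.

Definition Z4metrics : seq 'M[F2]_4 :=
  [seq gZ4 m | m <- enum 'I_4] ++ [seq gZ4 m + cc | m <- enum 'I_4].

From HB Require Import structures.
From mathcomp Require Import all_boot all_order all_algebra.
Import GRing.Theory.
Local Open Scope ring_scope.

(* Moving [x^rho] to the left through [dx^mu (x) dx^nu] with the bimodule
   relation produces, besides [x^rho dx^mu (x) dx^nu], only constant terms;
   for a constant form [g] they add up to [M^T g + g M], where [M] is the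
   matrix of multiplication by [x^rho] on [V].  So, in characteristic 2, [g]
   is central iff [g M = M^T g] for every [rho].  Symmetry, this intertwining
   condition and invertibility (a trivial left kernel, checked on the 16 row
   vectors of F_2^4) are decidable properties of the 2^16 matrices over F_2,
   and enumerating these classifies the quantum metrics of both algebras. *)

Definition structMx (Vc : structConst) (rho : 'I_4) : 'M[F2]_4 :=
  \matrix_(mu, tau) Vc mu rho tau.

Lemma ract2_constForm Vc rho g :
  ract2 Vc rho (constForm g) = lmul2 (constForm g) +
    constForm ((structMx Vc rho)^T *m g + g *m structMx Vc rho).
Proof.
apply/matrixP => tau s; rewrite !mxE.
have delta (F : 'I_4 -> P) k : \sum_(i < 4) F i *+ (i == k) = F k.
  by rewrite (bigD1 k) //= eqxx big1 ?addr0 // => i /negbTE ->.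
have ract1E mu nu : ract1 Vc rho mu (Rmat Vc rho nu s) 0 tau =
    ('X *+ (mu == tau) + (Vc mu rho tau)%:P) *+ (nu == s)
    + (Vc nu rho s)%:P *+ (mu == tau).
  rewrite /ract1 !mxE rmorphD rmorphMn /= map_polyX map_polyC /=.
  by rewrite rmorphD rmorphMn /= horner_mx_X horner_mx_C !mxE mulmxnE !mxE.
under eq_bigr do under eq_bigr do rewrite ract1E mxE mulrDr !mulrnAr.
under eq_bigr do rewrite big_split /= delta sumrMnl.
rewrite big_split /= delta.
under eq_bigr do rewrite mulrDr mulrnAr.
rewrite big_split /= delta !rmorphD /= !raddf_sum /= [_ * 'X]mulrC -addrA.
congr (_ + (_ + _)); apply: eq_bigr => i _; rewrite !mxE polyCM //.
by rewrite mulrC.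
Qed.

Lemma oppmx_F2 m n (A : 'M[F2]_(m, n)) : - A = A.
Proof. by apply/matrixP => i j; rewrite mxE oppr_pchar2 // pchar_Fp. Qed.

Lemma central_constFormP Vc g :
  (forall rho, lmul2 (constForm g) = ract2 Vc rho (constForm g)) <->
  (forall rho, g *m structMx Vc rho = (structMx Vc rho)^T *m g).
Proof.
suff central_at rho : lmul2 (constForm g) = ract2 Vc rho (constForm g) <->
    g *m structMx Vc rho = (structMx Vc rho)^T *m g.
  by split=> H rho; apply/central_at.
set M := structMx Vc rho; rewrite ract2_constForm /constForm.
have K0 : (M^T *m g + g *m M == 0) = (g *m M == M^T *m g).
  by rewrite addr_eq0 oppmx_F2 eq_sym.
split=> [central | /eqP].
  apply/eqP; rewrite -K0 -(map_mx_eq0 (@polyC F2) (M^T *m g + g *m M)); apply/eqP.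
  by apply: (addrI (lmul2 (constForm g))); rewrite -central addr0.
by rewrite -K0 => /eqP ->; rewrite map_mx0 addr0.
Qed.

Lemma unitmx_kerP (F : fieldType) n (A : 'M[F]_n) :
  reflect (forall u : 'rV_n, u *m A = 0 -> u = 0) (A \in unitmx).
Proof.
apply: (iffP idP) => [Aunit u uA0 | ker0].
  by rewrite -(mulmxK Aunit u) uA0 mul0mx.
apply: contraT; rewrite -row_free_unit -kermx_eq0 => kerA.
have [i rowi] : exists i, row i (kermx A) != 0.
  apply/existsP; apply: (contraNT _ kerA) => /existsPn rows0.
  by apply/eqP/row_matrixP => i; rewrite row0 (eqP (negbNE (rows0 i))).
have /ker0 rowi0 : row i (kermx A) *m A = 0 by apply/sub_kermxP; rewrite row_sub.
by rewrite rowi0 eqxx in rowi.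
Qed.

Fixpoint words {T : Type} (s : seq T) (n : nat) : seq (seq T) :=
  if n is n'.+1 then [seq x :: w | x <- s, w <- words s n'] else [:: [::]].

Lemma mem_words (T : eqType) (s : seq T) n w :
  (w \in words s n) = (size w == n) && all (mem s) w.
Proof.
elim: n w => [|n IHn] [|x w] //=.
  by apply/allpairsP => -[[y v] [_ _]].
apply/allpairsP/andP => [[[y v] /= [ys vw [-> ->]]] | [szw /andP [xs ws]]].
  by move: vw; rewrite IHn ys => /andP [/eqP-> ->].
by exists (x, w); rewrite /= IHn -eqSS szw ws xs.
Qed.

Lemma uniq_words (T : eqType) (s : seq T) n : uniq s -> uniq (words s n).
Proof.
move=> uniq_s; elim: n => [|n IHn] //=.
by apply: allpairs_uniq => // -[x w] [y v] _ _ [-> ->].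
Qed.

Definition bits (n : nat) : seq (seq bool) := words [:: false; true] n.

Lemma mem_bits n w : (w \in bits n) = (size w == n).
Proof. by rewrite mem_words; case: eqP => //= _; apply/allP => -[]. Qed.

Definition ords4 : seq 'I_4 :=
  [:: @Ordinal 4 0 isT; @Ordinal 4 1 isT; @Ordinal 4 2 isT; @Ordinal 4 3 isT].

Lemma enum_ord4 : enum 'I_4 = ords4.
Proof. by apply: (inj_map val_inj); rewrite val_enum_ord. Qed.

Lemma mem_ords4 (i : 'I_4) : i \in ords4.
Proof. by rewrite -enum_ord4 mem_enum. Qed.

Lemma nth_ords4 (T : Type) (x0 : T) (F : 'I_4 -> T) (k : 'I_4) :
  nth x0 [seq F i | i <- ords4] k = F k.
Proof. by case: k => [[|[|[|[|//]]]] ?]; congr F; apply: val_inj. Qed.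

Definition allI4 (P : pred 'I_4) : bool := all P ords4.

Lemma allI4P (P : pred 'I_4) : reflect (forall i, P i) (allI4 P).
Proof. by apply: (iffP allP) => H i //; rewrite H ?mem_ords4. Qed.

Definition xorI4 (P : pred 'I_4) : bool := foldr (fun i b => P i (+) b) false ords4.

Lemma natr_andb (R : pzSemiRingType) (a b : bool) : (a && b)%:R = a%:R * b%:R :> R.
Proof. by case: a; rewrite ?mul1r ?mul0r. Qed.

Lemma F2_natrD (a b : bool) : (a (+) b)%:R = a%:R + b%:R :> F2.
Proof. by case: a; case: b; apply: val_inj. Qed.

Lemma F2_natr_eq (a b : bool) : (a%:R == b%:R :> F2) = (a == b).
Proof. by case: a; case: b. Qed.

Lemma F2_natr_eq0 (b : bool) : (b%:R == 0 :> F2) = ~~ b.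
Proof. by case: b. Qed.

Lemma F2_ne0K (x : F2) : (x != 0)%:R = x.
Proof. by case: x => [[|[|//]] ?]; apply: val_inj. Qed.

Lemma sum_natr_xorI4 (P : pred 'I_4) : \sum_(k < 4) (P k)%:R = (xorI4 P)%:R :> F2.
Proof. by rewrite -big_enum /= enum_ord4 unlock /xorI4 /= !F2_natrD addr0. Qed.

Lemma mulmx_natr {m n} (a : 'I_m -> 'I_4 -> bool) (b : 'I_4 -> 'I_n -> bool)
    (A : 'M[F2]_(m, 4)) (B : 'M[F2]_(4, n)) :
    (forall i k, A i k = (a i k)%:R) -> (forall k j, B k j = (b k j)%:R) ->
  forall i j, (A *m B) i j = (xorI4 (fun k => a i k && b k j))%:R.
Proof.
move=> Aa Bb i j; rewrite mxE -sum_natr_xorI4.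
by apply: eq_bigr => k _; rewrite Aa Bb natr_andb.
Qed.

(* Computations are carried out on bit lists: matrices are locked, and 'F_2
   arithmetic is too slow under [vm_compute]. *)
Definition entry (l : seq bool) (i j : 'I_4) : bool := nth false l (4 * i + j).

Definition mx_of_bits (l : seq bool) : 'M[F2]_4 := \matrix_(i, j) (entry l i j)%:R.

Definition bits_of_mx (A : 'M[F2]_4) : seq bool :=
  [seq A i j != 0 | i <- ords4, j <- ords4].

Lemma size_bits_of_mx A : size (bits_of_mx A) = 16.
Proof. by rewrite size_allpairs. Qed.

Lemma entry_bits_of_mx A i j : entry (bits_of_mx A) i j = (A i j != 0).
Proof.
case: i j => [[|[|[|[|//]]]] ?] [[|[|[|[|//]]]] ?];
  by congr (A _ _ != 0); apply: val_inj.
Qed.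

Lemma bits_of_mxK : cancel bits_of_mx mx_of_bits.
Proof. by move=> A; apply/matrixP => i j; rewrite mxE entry_bits_of_mx F2_ne0K. Qed.

Lemma bits_of_mx_inj : injective bits_of_mx.
Proof. exact: can_inj bits_of_mxK. Qed.

Lemma mx_of_bitsK l : size l = 16 -> bits_of_mx (mx_of_bits l) = l.
Proof.
do 16! case: l => [|? l] //; case: l => // _.
by rewrite /bits_of_mx /= !mxE !F2_natr_eq0 !negbK.
Qed.

Definition bitConst : Type := 'I_4 -> 'I_4 -> 'I_4 -> bool.

Definition structConst_of_bits (Vb : bitConst) : structConst :=
  fun mu nu rho => (Vb mu nu rho)%:R.

Definition symmetric_bits (l : seq bool) : bool :=
  allI4 (fun i => allI4 (fun j => entry l j i == entry l i j)).

Definition intertwining_bits (Vb : bitConst) (l : seq bool) : bool :=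
  allI4 (fun rho => allI4 (fun i => allI4 (fun j =>
    xorI4 (fun k => entry l i k && Vb k rho j) ==
    xorI4 (fun k => Vb k rho i && entry l k j)))).

Definition nonsingular_bits (l : seq bool) : bool :=
  all (fun w => allI4 (fun j => ~~ xorI4 (fun k => nth false w k && entry l k j))
                ==> (w == nseq 4 false))
      (bits 4).

Lemma symmetric_bitsP l : reflect ((mx_of_bits l)^T = mx_of_bits l) (symmetric_bits l).
Proof.
apply: (iffP (allI4P _)) => [sym | /matrixP sym i].
  apply/matrixP => i j; rewrite !mxE; apply/eqP; rewrite F2_natr_eq.
  exact: (allI4P _ (sym i)).
by apply/allI4P => j; have := sym i j; rewrite !mxE => /eqP; rewrite F2_natr_eq.
Qed.

Lemma intertwining_bitsP Vb l :
  reflect (forall rho, mx_of_bits l *m structMx (structConst_of_bits Vb) rho =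
                       (structMx (structConst_of_bits Vb) rho)^T *m mx_of_bits l)
          (intertwining_bits Vb l).
Proof.
set M := structMx (structConst_of_bits Vb).
have mulE rho i j :
  (mx_of_bits l *m M rho) i j = (xorI4 (fun k => entry l i k && Vb k rho j))%:R.
  by apply: (mulmx_natr (entry l) (fun k j => Vb k rho j)) => *; rewrite !mxE.
have mulTE rho i j :
  ((M rho)^T *m mx_of_bits l) i j = (xorI4 (fun k => Vb k rho i && entry l k j))%:R.
  by apply: (mulmx_natr (fun i k => Vb k rho i) (entry l)) => *; rewrite !mxE.
apply: (iffP (allI4P _)) => [H rho | H rho].
  apply/matrixP => i j; rewrite mulE mulTE; apply/eqP; rewrite F2_natr_eq.
  exact: (allI4P _ (allI4P _ (H rho) i) j).
apply/allI4P => i; apply/allI4P => j.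
by rewrite -F2_natr_eq -mulE -mulTE H.
Qed.

Lemma nonsingular_bitsP l : reflect (mx_of_bits l \in unitmx) (nonsingular_bits l).
Proof.
have mulE w j : ((\row_k (nth false w k)%:R) *m mx_of_bits l) 0 j =
    (xorI4 (fun k => nth false w k && entry l k j))%:R.
  by apply: (mulmx_natr (fun _ k => nth false w k) (entry l)) => *; rewrite !mxE.
apply: (iffP allP) => [nonsing | /unitmx_kerP ker0 w].
  apply/unitmx_kerP => u uA0.
  set w := [seq u 0 k != 0 | k <- ords4].
  have uw : \row_k (nth false w k)%:R = u by apply/rowP => k; rewrite mxE nth_ords4 F2_ne0K.
  have /nonsing/implyP w0 : w \in bits 4 by rewrite mem_bits size_map.
  have /eqP {}w0 : w == nseq 4 false.
    by apply: w0; apply/allI4P => j; rewrite -F2_natr_eq0 -mulE uw uA0 mxE.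
  by apply/rowP => k; rewrite -uw w0 !mxE nth_nseq if_same.
rewrite mem_bits => /eqP size_w; apply/implyP => /allI4P vanish.
apply/eqP/(@eq_from_nth _ false) => [|k]; rewrite size_w // => lt_k4.
have /ker0/rowP/(_ (Ordinal lt_k4)) : \row_k (nth false w k)%:R *m mx_of_bits l = 0.
  by apply/rowP => j; rewrite mulE mxE; apply/eqP; rewrite F2_natr_eq0 vanish.
by rewrite !mxE nth_nseq lt_k4 => /eqP; rewrite F2_natr_eq0 => /negbTE.
Qed.

Definition qmetric_bits (Vb : bitConst) (l : seq bool) : bool :=
  [&& symmetric_bits l, intertwining_bits Vb l & nonsingular_bits l].

Lemma qmetric_bitsP Vb l :
  reflect (quantum_metric (structConst_of_bits Vb) (mx_of_bits l)) (qmetric_bits Vb l).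
Proof.
apply: (iffP and3P) => [[/symmetric_bitsP sym /intertwining_bitsP/central_constFormP central
                          /nonsingular_bitsP unit] | ].
  by split.
case=> /symmetric_bitsP sym /nonsingular_bitsP unit
       /central_constFormP/intertwining_bitsP inter.
by split.
Qed.

(* Filtering the symmetric codes first only speeds up the computation. *)
Definition qmetric_codes (Vb : bitConst) : seq (seq bool) :=
  [seq l <- [seq l <- bits 16 | symmetric_bits l] | qmetric_bits Vb l].

Definition qmetrics (Vb : bitConst) : seq 'M[F2]_4 :=
  map mx_of_bits (qmetric_codes Vb).

Lemma mem_qmetric_codes Vb l : (l \in qmetric_codes Vb) = (size l == 16) && qmetric_bits Vb l.
Proof.
by rewrite !mem_filter mem_bits /qmetric_bits; case: symmetric_bits; rewrite //= andbC.
Qed.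

Lemma qmetricsK Vb : map bits_of_mx (qmetrics Vb) = qmetric_codes Vb.
Proof.
rewrite -map_comp; apply: map_id_in => l; rewrite mem_qmetric_codes => /andP [/eqP size_l _].
exact: mx_of_bitsK.
Qed.

Lemma uniq_qmetrics Vb : uniq (qmetrics Vb).
Proof.
rewrite -(map_inj_uniq bits_of_mx_inj) qmetricsK.
by do 2 apply: filter_uniq; apply: uniq_words.
Qed.

Lemma mem_qmetrics Vb g : quantum_metric (structConst_of_bits Vb) g <-> g \in qmetrics Vb.
Proof.
rewrite -(mem_map bits_of_mx_inj) qmetricsK mem_qmetric_codes size_bits_of_mx eqxx /=.
by rewrite -{1}(bits_of_mxK g); exact: rwP (qmetric_bitsP _ _).
Qed.

(* [structConst_of_bits VZ4b] and [structConst_of_bits VA2b] are convertible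
   to [VZ4] and [VA2]. *)
Definition VZ4b (mu nu rho : 'I_4) : bool := ((mu + nu) %% 4 == rho)%N.

Definition VA2b (mu nu rho : 'I_4) : bool :=
  let s := (mu + nu)%N in ((if s < 4 then s else s - 3) == rho)%N.

Lemma bits_of_Z4metrics : map bits_of_mx Z4metrics =
  [seq [seq VZ4b i j m | i <- ords4, j <- ords4] | m <- ords4] ++
  [seq [seq ~~ VZ4b i j m | i <- ords4, j <- ords4] | m <- ords4].
Proof.
rewrite /Z4metrics enum_ord4 map_cat -!map_comp; congr (_ ++ _); apply: eq_map => m;
  apply: (@eq_allpairs _ (fun=> _)) => i j; rewrite !mxE.
  by rewrite F2_natr_eq0 negbK.
by rewrite -[1]/(true%:R) -F2_natrD F2_natr_eq0 addbT negbK.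
Qed.

Lemma perm_qmetrics_Z4 : perm_eq (qmetrics VZ4b) Z4metrics.
Proof.
rewrite -[Z4metrics](mapK bits_of_mxK); apply: perm_map.
by rewrite bits_of_Z4metrics; vm_compute.
Qed.

Lemma size_qmetrics_A2 : size (qmetrics VA2b) = 3.
Proof. by rewrite size_map; vm_compute. Qed.

Theorem mainTheorem11 :
  (* (a) *)
  (uniq Z4metrics /\ size Z4metrics = 8%N /\
   forall g : 'M['F_2]_4, quantum_metric VZ4 g <-> g \in Z4metrics) /\
  (* (b) *)
  (exists s : seq 'M['F_2]_4,
     uniq s /\ size s = 3%N /\
     forall g : 'M['F_2]_4, quantum_metric VA2 g <-> g \in s).
Proof.
have Z4 := perm_qmetrics_Z4.
split.
  split; first by rewrite -(perm_uniq Z4) uniq_qmetrics.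
  split; first by rewrite /Z4metrics enum_ord4.
  by move=> g; rewrite -(perm_mem Z4); apply: mem_qmetrics.
exists (qmetrics VA2b); split; first exact: uniq_qmetrics.
split; first exact: size_qmetrics_A2.
exact: mem_qmetrics.
Qed.
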